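(* Let $P$ be a weakly ranked poset, let $\kappa$ be a $P$-kernel, and let $f,g\in\mathscr{I}_{1/2}(P)$ be its right and left KLS-functions. Suppose $x\in P$ and $h\in\mathscr{I}_{1/2}(P)$ satisfy $(\bar h f)_{xz}(t)=(h\bar f)_{xz}(t)$ for all $z\ge x$. Then $h_{xz}(t)=g_{xz}(t)$ for all $z\ge x$.
   Context: A weakly ranked poset is a locally finite poset $P$ (all intervals finite) with a weak rank function: integers $r_{xy}$ for $x\le y$ with $r_{xy}>0$ for $x<y$ and $r_{xy}+r_{yz}=r_{xz}$. $I(P)=\prod_{x\le y}\mathbb{Z}[t]$ with components $f_{xy}(t)$ is a ring under convolution $(fg)_{xz}=\sum_{x\le y\le z}f_{xy}g_{yz}$ with identity $\delta$ ($\delta_{xx}=1$, $\delta_{xy}=0$ for $x<y$). $\mathscr{I}(P)$ is the subring of $f$ with $\deg f_{xy}\le r_{xy}$; it has the involution $\bar f_{xy}(t)=t^{r_{xy}}f_{xy}(t^{-1})$. $\mathscr{I}_{1/2}(P)$ is the set of $f\in\mathscr{I}(P)$ with $f_{xx}=1$ for all $x$ and $\deg f_{xy}<r_{xy}/2$ for $x<y$. A $P$-kernel is $\kappa\in\mathscr{I}(P)$ with $\kappa_{xx}=1$ for all $x$ and $\kappa^{-1}=\bar\kappa$. For a $P$-kernel $\kappa$ there are unique $f,g\in\mathscr{I}_{1/2}(P)$ with $\bar f=\kappa f$ and $\bar g=g\kappa$; $f$ is the right and $g$ the left KLS-function of $\kappa$. *)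

From HB Require Import structures.
From mathcomp Require Import all_boot all_order all_algebra.
Set Implicit Arguments. Unset Strict Implicit. Unset Printing Implicit Defensive.
Import Order.TTheory GRing.Theory.
Local Open Scope order_scope.

(* A weakly ranked poset: a partial order T, locally finite (each interval
   [x,z] is enumerated by a duplicate-free list), with a weak rank function. *)
Record wrposet (d : Order.disp_t) (T : porderType d) := WRPoset {
  itv : T -> T -> seq T;
  itv_uniq : forall x z, uniq (itv x z);
  mem_itv : forall x y z, (y \in itv x z) = (x <= y <= z);
  rk : T -> T -> int;
  rk_pos : forall x y, x < y -> (0 < rk x y)%R;
  rk_add : forall x y z, x <= y -> y <= z -> (rk x y + rk y z)%R = rk x z
}.

Local Open Scope ring_scope.

(* Elements of I(P): components f x y for x <= y (other values irrelevant). *)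
Definition incid (T : Type) := T -> T -> {poly int}.

Section Incidence.
Variables (d : Order.disp_t) (T : porderType d) (P : wrposet T).

Definition conv (f g : incid T) : incid T :=
  fun x z => \sum_(y <- itv P x z) f x y * g y z.

Definition delta : incid T := fun x y => if x == y then 1 else 0.

Definition eqI (f g : incid T) : Prop :=
  forall x y, (x <= y)%O -> f x y = g x y.

Definition in_I (f : incid T) : Prop :=
  forall x y, (x <= y)%O -> (size (f x y) <= `|rk P x y|.+1)%N.

(* involution: bar f_xy (t) = t^{r_xy} f_xy(t^{-1}) (for deg f_xy <= r_xy) *)
Definition bar (f : incid T) : incid T :=
  fun x y => \poly_(i < `|rk P x y|.+1) (f x y)`_(`|rk P x y| - i).

Definition in_Ihalf (f : incid T) : Prop :=
  in_I f /\ (forall x, f x x = 1) /\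
  (forall x y, (x < y)%O -> 2%:Z * ((size (f x y)).-1)%:Z < rk P x y).

Definition is_kernel (k : incid T) : Prop :=
  in_I k /\ (forall x, k x x = 1) /\
  eqI (conv k (bar k)) delta /\ eqI (conv (bar k) k) delta.

Definition right_KLS (k f : incid T) : Prop :=
  in_Ihalf f /\ eqI (bar f) (conv k f).

Definition left_KLS (k g : incid T) : Prop :=
  in_Ihalf g /\ eqI (bar g) (conv g k).

End Incidence.

(* On the row of x, [h̄ f = h f̄ = h κ f] and [f] is unitriangular, so [h̄ = h κ]
   there, just as [ḡ = g κ].  Inducting up the interval [x, z], if [h] and [g]
   agree below [z] then [h̄_xz - ḡ_xz = h_xz - g_xz], so [h_xz - g_xz] is a
   polynomial of degree [< r_xz / 2] fixed by reversal in degree [r_xz], hence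
   zero. *)

From HB Require Import structures.
From mathcomp Require Import all_boot all_order all_algebra.
From mathcomp Require Import zify.
Set Implicit Arguments. Unset Strict Implicit. Unset Printing Implicit Defensive.
Import Order.TTheory GRing.Theory.
Local Open Scope order_scope.

Section RevPoly.
Local Open Scope ring_scope.

Definition rev_poly (R : nzRingType) (r : nat) (p : {poly R}) : {poly R} :=
  \poly_(i < r.+1) p`_(r - i).

Lemma rev_polyB (R : nzRingType) r (p q : {poly R}) :
  rev_poly r (p - q) = rev_poly r p - rev_poly r q.
Proof. by apply/polyP => i; rewrite coefB !coef_poly; case: ifP; rewrite ?coefB ?subr0. Qed.

Lemma rev_poly_fixed_eq0 (R : nzRingType) r (p : {poly R}) :
  (2 * (size p).-1 < r)%N -> rev_poly r p = p -> p = 0.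
Proof.
move=> small_p rev_p; apply/polyP => i; rewrite coef0.
have [i_lt_p | ] := ltnP i (size p); last exact: nth_default.
rewrite -rev_p coef_poly; case: ifP => // i_le_r.
by apply: nth_default; move: (size p) small_p i_lt_p => [|s] /=; lia.
Qed.

Lemma rev_poly_fixed_eq (R : nzRingType) r (p q : {poly R}) :
  (2 * (size p).-1 < r)%N -> (2 * (size q).-1 < r)%N ->
  rev_poly r p - rev_poly r q = p - q -> p = q.
Proof.
move=> small_p small_q rev_pq; apply/eqP; rewrite -subr_eq0; apply/eqP.
apply: (@rev_poly_fixed_eq0 _ r); last by rewrite rev_polyB.
have : (size (p - q)%R <= maxn (size p) (size q))%N.
  by rewrite -(size_polyN q); apply: size_polyD.
by move: (size (p - q)%R) (size p) (size q) small_p small_q => ? ? ?; lia.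
Qed.

End RevPoly.

Section Incidence.
Local Open Scope ring_scope.
Variables (d : Order.disp_t) (T : porderType d) (P : wrposet T).

Lemma bar_rev_poly (F : incid T) x z : bar P F x z = rev_poly `|rk P x z| (F x z).
Proof. by []. Qed.

Lemma in_Ihalf_size (F : incid T) x z : in_Ihalf P F -> (x < z)%O ->
  (2 * (size (F x z)).-1 < `|rk P x z|)%N.
Proof. by move=> [_ [_ small_F]] /small_F; lia. Qed.

Lemma perm_itv_ge (x y z : T) : (x <= y)%O ->
  perm_eq (itv P y z) [seq w <- itv P x z | (y <= w)%O].
Proof.
move=> xy; apply: uniq_perm; rewrite ?filter_uniq ?itv_uniq // => w.
rewrite mem_filter !mem_itv; case: (boolP (y <= w)%O) => //= yw.
by rewrite (le_trans xy yw).
Qed.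

Lemma perm_itv_le (x w z : T) : (w <= z)%O ->
  perm_eq (itv P x w) [seq y <- itv P x z | (y <= w)%O].
Proof.
move=> wz; apply: uniq_perm; rewrite ?filter_uniq ?itv_uniq // => y.
rewrite mem_filter !mem_itv; case: (boolP (y <= w)%O) => yw; rewrite ?andbF //=.
by rewrite (le_trans yw wz) !andbT.
Qed.

Lemma conv_assoc (A B C : incid T) x z :
  conv P (conv P A B) C x z = conv P A (conv P B C) x z.
Proof.
rewrite /conv; transitivity (\sum_(w <- itv P x z) \sum_(y <- itv P x z)
    (if (y <= w)%O then A x y * B y w * C w z else 0)).
  rewrite [LHS]big_seq [RHS]big_seq; apply: eq_bigr => w; rewrite mem_itv => /andP[_ wz].
  rewrite mulr_suml (perm_big _ (perm_itv_le x wz)) big_filter [LHS]big_mkcond.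
  by apply: eq_bigr => y _; case: ifP.
rewrite exchange_big [LHS]big_seq [RHS]big_seq; apply: eq_bigr => y; rewrite mem_itv => /andP[xy _].
rewrite mulr_sumr (perm_big _ (perm_itv_ge z xy)) big_filter [RHS]big_mkcond.
by apply: eq_bigr => w _; case: ifP; rewrite ?mulrA.
Qed.

Lemma conv_subl_top (A B K : incid T) x z : (x <= z)%O ->
  (forall y, (x <= y)%O -> (y < z)%O -> A x y = B x y) ->
  conv P A K x z - conv P B K x z = (A x z - B x z) * K z z.
Proof.
move=> xz eqAB; rewrite /conv -sumrB (bigD1_seq z) ?mem_itv ?xz ?lexx ?itv_uniq //=.
rewrite mulrBl big_seq_cond big1 ?addr0 // => y /andP[]; rewrite mem_itv.
by move=> /andP[xy yz] y_neq_z; rewrite eqAB ?subrr // lt_neqAle y_neq_z.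
Qed.

Lemma itv_ind x (Q : T -> Prop) :
  (forall z, (x <= z)%O -> (forall y, (x <= y)%O -> (y < z)%O -> Q y) -> Q z) ->
  forall z, (x <= z)%O -> Q z.
Proof.
move=> IHz; suff Qn n z : (size (itv P x z) <= n)%N -> (x <= z)%O -> Q z.
  by move=> z; apply: Qn (leqnn _).
elim: n z => [|n IHn] z.
  by rewrite leqn0 => /nilP itv0 xz; have := mem_itv P x z z; rewrite itv0 xz lexx.
move=> size_xz xz; apply: (IHz z xz) => y xy yz; apply: (IHn y _ xy).
have : (size (z :: itv P x y) <= size (itv P x z))%N.
  apply: uniq_leq_size => [|w].
    by rewrite /= itv_uniq mem_itv (lt_geF yz) andbF.
  rewrite inE !mem_itv => /orP[/eqP ->|/andP[xw wy]].
    by rewrite (le_trans xy (ltW yz)) lexx.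
  by rewrite xw (le_trans wy (ltW yz)).
by move=> /leq_trans /(_ size_xz).
Qed.

Lemma conv_row_cancelr (A B K : incid T) x :
  (forall z, K z z = 1) ->
  (forall z, (x <= z)%O -> conv P A K x z = conv P B K x z) ->
  forall z, (x <= z)%O -> A x z = B x z.
Proof.
move=> K1 eqAK; apply: itv_ind => z xz eqAB.
apply/eqP; rewrite -subr_eq0 -[A x z - _]mulr1 -(K1 z) -conv_subl_top //.
by rewrite eqAK ?subrr.
Qed.

Lemma left_KLS_row_unique (kappa h g : incid T) x :
  (forall z, kappa z z = 1) -> in_Ihalf P h -> in_Ihalf P g ->
  (forall z, (x <= z)%O -> bar P h x z = conv P h kappa x z) ->
  (forall z, (x <= z)%O -> bar P g x z = conv P g kappa x z) ->
  forall z, (x <= z)%O -> h x z = g x z.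
Proof.
move=> kappa1 hI gI barh barg; apply: itv_ind => z xz eqhg.
have [<- | x_neq_z] := eqVneq x z; first by rewrite hI.2.1 gI.2.1.
have xz' : (x < z)%O by rewrite lt_neqAle x_neq_z.
apply: (rev_poly_fixed_eq (in_Ihalf_size hI xz') (in_Ihalf_size gI xz')).
by rewrite -!bar_rev_poly barh ?barg // conv_subl_top // kappa1 mulr1.
Qed.

End Incidence.

Theorem proposition2p8 (d : Order.disp_t) (T : porderType d) (P : wrposet T)
  (kappa f g h : incid T) (x : T) :
  is_kernel P kappa -> right_KLS P kappa f -> left_KLS P kappa g ->
  in_Ihalf P h ->
  (forall z, x <= z -> conv P (bar P h) f x z = conv P h (bar P f) x z) ->
  forall z, x <= z -> h x z = g x z.
Proof.
move=> [_ [kappa1 _]] [[_ [f1 _]] barf] [gI barg] hI barh_f.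
have barh : forall z, x <= z -> bar P h x z = conv P h kappa x z.
  apply: (conv_row_cancelr (P := P) f1) => z xz.
  rewrite barh_f // conv_assoc /conv; apply: eq_big_seq => y.
  by rewrite mem_itv => /andP[_ yz]; rewrite barf.
by apply: (left_KLS_row_unique kappa1 hI gI barh) => z xz; apply: barg.
Qed.
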